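(* Let $\Gamma=(V,E)$ be a simple graph of order $n$ and size $m$, and let $\lambda$ be the spectral radius of $\Gamma$. Then the global dual alliance number of $\Gamma$ satisfies $$\gamma_{a_d}(\Gamma)\ge \left\lceil\frac{2m+n}{4(\lambda+1)}\right\rceil$$ and the global strong dual alliance number of $\Gamma$ satisfies $$\gamma_{\hat{a}_d}(\Gamma)\ge \left\lceil\frac{m+n}{2\lambda+1}\right\rceil.$$
   Context: For $S\subseteq V$ and $v\in V$, $N_S(v)=\{u\in S: u\sim v\}$ and $N_{V\setminus S}(v)=\{u\in V\setminus S: u\sim v\}$. A nonempty set $S\subseteq V$ is a global dual alliance if (i) $|N_S(v)|+1\ge |N_{V\setminus S}(v)|$ for every $v\in S$ and (ii) $|N_S(v)|\ge |N_{V\setminus S}(v)|+1$ for every $v\in V\setminus S$. It is a global strong dual alliance if (i') $|N_S(v)|\ge |N_{V\setminus S}(v)|$ for every $v\in S$ and (ii') $|N_S(v)|\ge |N_{V\setminus S}(v)|+2$ for every $v\in V\setminus S$. $\gamma_{a_d}(\Gamma)$ (resp. $\gamma_{\hat a_d}(\Gamma)$) is the minimum cardinality of a global dual (resp. global strong dual) alliance. The spectral radius is the largest eigenvalue of the adjacency matrix of $\Gamma$. *)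

From HB Require Import structures.
From mathcomp Require Import all_boot all_order all_algebra.
From mathcomp Require Import reals.
Set Implicit Arguments. Unset Strict Implicit. Unset Printing Implicit Defensive.
Import Order.TTheory GRing.Theory Num.Theory.

Definition simple_graph (n : nat) (e : rel 'I_n) : Prop :=
  irreflexive e /\ symmetric e.

Definition gsize (n : nat) (e : rel 'I_n) : nat :=
  #|[set p : 'I_n * 'I_n | e p.1 p.2 && (p.1 < p.2)%N]|.

Definition nbhd (n : nat) (e : rel 'I_n) (S : {set 'I_n}) (v : 'I_n) : {set 'I_n} :=
  [set u in S | e u v].

Definition global_dual_alliance (n : nat) (e : rel 'I_n) (S : {set 'I_n}) : bool :=
  [&& S != set0,
      [forall v in S, #|nbhd e (~: S) v| <= #|nbhd e S v| + 1] &
      [forall v in ~: S, #|nbhd e (~: S) v| + 1 <= #|nbhd e S v|]].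

Definition global_strong_dual_alliance (n : nat) (e : rel 'I_n) (S : {set 'I_n}) : bool :=
  [&& S != set0,
      [forall v in S, #|nbhd e (~: S) v| <= #|nbhd e S v|] &
      [forall v in ~: S, #|nbhd e (~: S) v| + 2 <= #|nbhd e S v|]].

(* minimum cardinality (the full vertex set is always such an alliance when n > 0) *)
Definition gamma_ad (n : nat) (e : rel 'I_n) : nat :=
  \big[minn/n]_(S : {set 'I_n} | global_dual_alliance e S) #|S|.

Definition gamma_sad (n : nat) (e : rel 'I_n) : nat :=
  \big[minn/n]_(S : {set 'I_n} | global_strong_dual_alliance e S) #|S|.

Definition adjmx (R : nzRingType) (n : nat) (e : rel 'I_n) : 'M[R]_n :=
  \matrix_(i, j) (e i j)%:R%R.

Definition spectral_radius (R : realType) (n : nat) (e : rel 'I_n) (lam : R) : Prop :=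
  eigenvalue (adjmx R e) lam /\ (forall mu : R, eigenvalue (adjmx R e) mu -> (mu <= lam)%R).

(* Let S be a global (strong) dual alliance and let a, b, c count the ordered
   pairs of adjacent vertices inside S, from S to its complement, and inside the
   complement, so that 2m = a + 2b + c.  Summing the alliance conditions over S
   and over its complement gives b <= a + |S| and c + (n - |S|) <= b (resp.
   b <= a and c + 2(n - |S|) <= b), whence 2m + n <= 4(a + |S|) (resp.
   m + n <= 2a + |S|).  Finally a is the quadratic form of the adjacency matrix
   at the indicator vector of S, so a <= lam |S| by the Rayleigh bound, which
   holds because the supremum of the Rayleigh quotients of a symmetric matrix
   is an eigenvalue. *)

From HB Require Import structures.
From mathcomp Require Import all_boot all_order all_algebra.
From mathcomp Require Import reals.
From mathcomp Require Import ring lra zify.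
Import Order.TTheory GRing.Theory Num.Theory.
Set Implicit Arguments. Unset Strict Implicit. Unset Printing Implicit Defensive.

Section EdgeCount.
Variables (n : nat) (e : rel 'I_n).
Hypotheses (e_irr : irreflexive e) (e_sym : symmetric e).
Implicit Types (S T : {set 'I_n}).

Definition edge_count S T : nat := \sum_(v in T) #|nbhd e S v|.

Lemma card_nbhd S v : #|nbhd e S v| = \sum_(u in S) e u v.
Proof.
rewrite /nbhd -sum1_card big_mkcond [RHS]big_mkcond; apply: eq_bigr => u _.
by rewrite inE; case: (u \in S); case: (e u v).
Qed.

Lemma edge_countC S T : edge_count S T = edge_count T S.
Proof.
rewrite /edge_count; under eq_bigr do rewrite card_nbhd.
rewrite exchange_big; apply: eq_bigr => u _; rewrite card_nbhd.
by apply: eq_bigr => v _; rewrite e_sym.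
Qed.

Lemma edge_countTl S T : edge_count [set: 'I_n] T = edge_count S T + edge_count (~: S) T.
Proof.
rewrite /edge_count -big_split; apply: eq_bigr => v _ /=.
rewrite !card_nbhd (bigID (mem S)) /=.
by congr (_ + _); apply: eq_bigl => u; rewrite !inE ?andbT.
Qed.

Lemma edge_countTr S T : edge_count S [set: 'I_n] = edge_count S T + edge_count S (~: T).
Proof.
rewrite /edge_count (bigID (mem T)) /=.
by congr (_ + _); apply: eq_bigl => v; rewrite !inE ?andbT.
Qed.

Lemma edge_count_setT : edge_count [set: 'I_n] [set: 'I_n] = 2 * gsize e.
Proof.
have gsizeE : gsize e = \sum_p (e p.1 p.2 && (p.1 < p.2) : nat).
  rewrite /gsize -sum1_card big_mkcond /=; apply: eq_bigr => p _.
  by rewrite inE; case: (_ && _).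
have swap_inj : injective (fun p : 'I_n * 'I_n => (p.2, p.1)) by move=> [a b] [c d] [-> ->].
have gsizeE' : gsize e = \sum_p (e p.1 p.2 && (p.2 < p.1) : nat).
  rewrite gsizeE (reindex_inj swap_inj) /=; apply: eq_bigr => p _.
  by rewrite e_sym.
have sumT (F : 'I_n -> nat) : \sum_(v in [set: 'I_n]) F v = \sum_v F v.
  by apply: eq_bigl => v; rewrite inE.
rewrite /edge_count sumT; under eq_bigr do rewrite card_nbhd sumT.
rewrite pair_bigA /= mul2n -addnn {1}gsizeE' gsizeE -big_split /=.
apply: eq_bigr => [[u v]] _ /=.
by case: (ltngtP u v) => [||/val_inj <-]; rewrite ?andbT ?andbF /= ?addn0 ?e_irr // e_sym.
Qed.

Lemma edge_count_leq S S' T k k' :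
  (forall v, v \in T -> #|nbhd e S v| + k <= #|nbhd e S' v| + k') ->
  edge_count S T + #|T| * k <= edge_count S' T + #|T| * k'.
Proof.
by move=> le_nbhd; rewrite /edge_count -!sum_nat_const -!big_split leq_sum.
Qed.

Lemma edge_count_partition S :
  2 * gsize e = edge_count S S + 2 * edge_count S (~: S) + edge_count (~: S) (~: S).
Proof.
rewrite -edge_count_setT (edge_countTl S) !(edge_countTr _ S).
by rewrite (edge_countC (~: S) S); lia.
Qed.

Lemma global_dual_alliance_edge_bound S : global_dual_alliance e S ->
  2 * gsize e + n <= 4 * edge_count S S + 4 * #|S|.
Proof.
case/and3P=> _ /forall_inP inS /forall_inP outS.
have le_in : edge_count (~: S) S + #|S| * 0 <= edge_count S S + #|S| * 1.
  by apply: edge_count_leq => v /inS; rewrite addn0.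
have le_out : edge_count (~: S) (~: S) + #|~: S| * 1 <= edge_count S (~: S) + #|~: S| * 0.
  by apply: edge_count_leq => v /outS; rewrite addn0.
rewrite (edge_countC (~: S) S) in le_in.
have := cardsC S; have := edge_count_partition S; rewrite card_ord; lia.
Qed.

Lemma global_strong_dual_alliance_edge_bound S : global_strong_dual_alliance e S ->
  gsize e + n <= 2 * edge_count S S + #|S|.
Proof.
case/and3P=> _ /forall_inP inS /forall_inP outS.
have le_in : edge_count (~: S) S + #|S| * 0 <= edge_count S S + #|S| * 0.
  by apply: edge_count_leq => v /inS; rewrite !addn0.
have le_out : edge_count (~: S) (~: S) + #|~: S| * 2 <= edge_count S (~: S) + #|~: S| * 0.
  by apply: edge_count_leq => v /outS; rewrite addn0.
rewrite (edge_countC (~: S) S) in le_in.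
have := cardsC S; have := edge_count_partition S; rewrite card_ord; lia.
Qed.

Lemma nbhd_setC_setT v : nbhd e (~: [set: 'I_n]) v = set0.
Proof. by apply/setP => u; rewrite !inE. Qed.

Lemma global_dual_alliance_setT : 0 < n -> global_dual_alliance e [set: 'I_n].
Proof.
move=> n_gt0; apply/and3P; split.
- by apply/set0Pn; exists (Ordinal n_gt0); rewrite inE.
- by apply/forall_inP => v _; rewrite nbhd_setC_setT cards0.
- by apply/forall_inP => v; rewrite setCT inE.
Qed.

Lemma global_strong_dual_alliance_setT : 0 < n ->
  global_strong_dual_alliance e [set: 'I_n].
Proof.
move=> n_gt0; apply/and3P; split.
- by apply/set0Pn; exists (Ordinal n_gt0); rewrite inE.
- by apply/forall_inP => v _; rewrite nbhd_setC_setT cards0.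
- by apply/forall_inP => v; rewrite setCT inE.
Qed.

End EdgeCount.

Local Open Scope ring_scope.

Lemma quadratic_ge0_discr (R : realFieldType) (a b c : R) :
  0 <= c -> (forall t, 0 <= a + 2 * b * t + c * t ^+ 2) -> b ^+ 2 <= a * c.
Proof.
move=> c_ge0 q_ge0; have [c_gt0|c_le0] := ltrP 0 c.
  have : c * (- b / c) = - b by field; rewrite gt_eqF.
  have := q_ge0 (- b / c); nra.
have c0 : c = 0 by apply/le_anti; rewrite c_le0 c_ge0.
rewrite {}c0 in q_ge0 *.
have [-> | b_neq0] := eqVneq b 0; first by rewrite expr0n mulr0.
have := q_ge0 (- (a + 1) / (2 * b)).
have : 2 * b * (- (a + 1) / (2 * b)) = - (a + 1) by field.
lra.
Qed.

Section RayleighQuotient.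
Variables (R : realType) (n : nat).
Implicit Types (A B C : 'M[R]_n) (u v w x : 'rV[R]_n).

Definition bform C u w : R := (u *m C *m w^T) 0 0.
Definition sqnorm x : R := (x *m x^T) 0 0.
Definition psdmx B : Prop := forall x, 0 <= bform B x x.

Lemma bformDl C u v w : bform C (u + v) w = bform C u w + bform C v w.
Proof. by rewrite /bform !mulmxDl mxE. Qed.

Lemma bformZl C t u w : bform C (t *: u) w = t * bform C u w.
Proof. by rewrite /bform -!scalemxAl mxE. Qed.

Lemma bformDr C u v w : bform C u (v + w) = bform C u v + bform C u w.
Proof. by rewrite /bform linearD /= mulmxDr mxE. Qed.

Lemma bformZr C t u w : bform C u (t *: w) = t * bform C u w.
Proof. by rewrite /bform linearZ /= -scalemxAr mxE. Qed.

Lemma bformC C u w : C^T = C -> bform C u w = bform C w u.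
Proof.
move=> symC; rewrite /bform -[in LHS](trmxK (u *m C *m w^T)) [in LHS]mxE.
by rewrite !trmx_mul trmxK symC mulmxA.
Qed.

Lemma bformBm C D u w : bform (C - D) u w = bform C u w - bform D u w.
Proof. by rewrite /bform mulmxBr mulmxBl !mxE. Qed.

Lemma bform_scalar (a : R) u : bform a%:M u u = a * sqnorm u.
Proof. by rewrite /bform mul_mx_scalar -scalemxAl mxE. Qed.

Lemma bform0 C : bform C 0 0 = 0.
Proof. by rewrite /bform !mul0mx mxE. Qed.

Lemma bformE C x : bform C x x = \sum_j \sum_i x 0 i * C i j * x 0 j.
Proof. by rewrite /bform mxE; apply: eq_bigr => j _; rewrite !mxE mulr_suml. Qed.

Lemma sqnormE x : sqnorm x = \sum_i x 0 i ^+ 2.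
Proof. by rewrite /sqnorm mxE; apply: eq_bigr => i _; rewrite mxE expr2. Qed.

Lemma sqnorm0 : sqnorm 0 = 0.
Proof. by rewrite /sqnorm mul0mx mxE. Qed.

Lemma sqr_le_sqnorm x i : x 0 i ^+ 2 <= sqnorm x.
Proof. by rewrite sqnormE (bigD1 i) //= lerDl sumr_ge0 // => j _; apply: sqr_ge0. Qed.

Lemma sqnorm_ge0 x : 0 <= sqnorm x.
Proof. by rewrite sqnormE sumr_ge0 // => j _; apply: sqr_ge0. Qed.

Lemma sqnorm_gt0 x : x != 0 -> 0 < sqnorm x.
Proof.
move=> x_neq0; have [i xi_neq0|x0] := pickP (fun i => x 0 i != 0).
  by apply: lt_le_trans (sqr_le_sqnorm x i); rewrite exprn_even_gt0.
case/eqP: x_neq0; apply/rowP => i.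
by move: (x0 i) => /= /negbFE/eqP ->; rewrite mxE.
Qed.

Lemma bform_le_sum_norm C x : bform C x x <= (\sum_i \sum_j `|C i j|) * sqnorm x.
Proof.
rewrite bformE exchange_big /= mulr_suml; apply: ler_sum => i _.
rewrite mulr_suml; apply: ler_sum => j _.
have := sqr_le_sqnorm x i; have := sqr_le_sqnorm x j => xj xi.
have xixj_le : x 0 i * x 0 j <= sqnorm x by nra.
have xixj_ge : - sqnorm x <= x 0 i * x 0 j by nra.
rewrite mulrAC mulrC; have [Cij_ge0|Cij_lt0] := lerP 0 (C i j).
  by rewrite ger0_norm //; nra.
by rewrite ltr0_norm //; nra.
Qed.

Lemma psdmx_CauchySchwarz B u w : B^T = B -> psdmx B ->
  bform B u w ^+ 2 <= bform B u u * bform B w w.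
Proof.
move=> symB psdB; apply: quadratic_ge0_discr => // t.
have := psdB (u + t *: w).
by rewrite !bformDl !bformDr !bformZl !bformZr (bformC w u symB); nra.
Qed.

Lemma psdmx_unit_coercive B : B^T = B -> psdmx B -> B \in unitmx ->
  exists2 K, 0 < K & forall x, sqnorm x <= K * bform B x x.
Proof.
move=> symB psdB unitB; pose Binv := (invmx B)^T.
pose K : R := \sum_i \sum_j `|Binv i j| + 1.
have K_gt0 : 0 < K by rewrite ltr_pwDr // !sumr_ge0 // => i _; rewrite sumr_ge0.
exists K => // x; pose y := x *m invmx B.
have yB : y *m B = x by rewrite mulmxKV.
have Bxy : bform B x y = sqnorm x by rewrite bformC // /bform yB.
have Byy : bform B y y = bform Binv x x by rewrite /bform yB trmx_mul mulmxA.
have Byy_le : bform B y y <= K * sqnorm x.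
  rewrite Byy; apply: le_trans (bform_le_sum_norm _ _) _.
  by rewrite ler_wpM2r ?sqnorm_ge0 // lerDl.
have : sqnorm x ^+ 2 <= bform B x x * (K * sqnorm x).
  rewrite -{1}Bxy; apply: le_trans (psdmx_CauchySchwarz x y symB psdB) _.
  apply: ler_wpM2l; [exact: psdB | exact: Byy_le].
have : 0 <= K * bform B x x by rewrite mulr_ge0 ?psdB ?ltW.
nra.
Qed.

Definition rayleigh_quotients A : classical_sets.set R :=
  fun r => exists2 x, x != 0 & r = bform A x x / sqnorm x.

Lemma rayleigh_quotients_ubound A :
  classical_sets.ubound (rayleigh_quotients A) (\sum_i \sum_j `|A i j|).
Proof.
by move=> _ [x x_neq0 ->]; rewrite ler_pdivrMr ?sqnorm_gt0 ?bform_le_sum_norm.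
Qed.

Lemma bform_le_sup_rayleigh A x : bform A x x <= sup (rayleigh_quotients A) * sqnorm x.
Proof.
have [->|x_neq0] := eqVneq x 0; first by rewrite bform0 sqnorm0 mulr0.
rewrite -ler_pdivrMr ?sqnorm_gt0 //; apply: ub_le_sup; last by exists x.
by exists (\sum_i \sum_j `|A i j|); apply: rayleigh_quotients_ubound.
Qed.

(* Otherwise [M%:M - A] would be an invertible positive semidefinite matrix,
   hence coercive with some constant [K], and [M - K^-1] would be a smaller
   upper bound. *)
Lemma sup_rayleigh_quotients_eigenvalue A x0 : A^T = A -> x0 != 0 ->
  eigenvalue A (sup (rayleigh_quotients A)).
Proof.
move=> symA x0_neq0; set M := sup _.
have symB : (M%:M - A)^T = M%:M - A by rewrite linearB /= tr_scalar_mx symA.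
have psdB : psdmx (M%:M - A).
  by move=> x; rewrite bformBm bform_scalar subr_ge0 bform_le_sup_rayleigh.
apply: contraT => notEig.
have unitB : M%:M - A \in unitmx.
  rewrite -opprB -scaleN1r unitmxZ ?unitrN1 // -row_free_unit -kermx_eq0.
  by move: notEig; rewrite /eigenvalue /eigenspace negbK.
have [K K_gt0 coerc] := psdmx_unit_coercive symB psdB unitB.
suff M_le : M <= M - K^-1.
  have : 0 < K^-1 by rewrite invr_gt0.
  lra.
have neA : classical_sets.nonempty (rayleigh_quotients A).
  by exists (bform A x0 x0 / sqnorm x0), x0.
apply: (ge_sup neA) => _ [x x_neq0 ->].
have x_gt0 := sqnorm_gt0 x_neq0.
have := coerc x; rewrite bformBm bform_scalar -ler_pdivrMl // => le_x.
by rewrite ler_pdivrMr // mulrBl lerBrDl -lerBrDr.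
Qed.

Lemma bform_le_max_eigenvalue A (lam : R) x : A^T = A ->
  (forall mu, eigenvalue A mu -> mu <= lam) -> bform A x x <= lam * sqnorm x.
Proof.
move=> symA lam_max; have [->|x_neq0] := eqVneq x 0.
  by rewrite bform0 sqnorm0 mulr0.
have M_le := lam_max _ (sup_rayleigh_quotients_eigenvalue symA x_neq0).
exact: le_trans (bform_le_sup_rayleigh A x) (ler_wpM2r (sqnorm_ge0 x) M_le).
Qed.

End RayleighQuotient.

Section SpectralBound.
Variables (R : realType) (n : nat) (e : rel 'I_n) (lam : R).
Hypotheses (n_gt0 : (0 < n)%N) (e_simple : simple_graph e).
Hypothesis lam_ub : forall mu, eigenvalue (adjmx R e) mu -> mu <= lam.
Implicit Types S : {set 'I_n}.

Definition indicator_row S : 'rV[R]_n := \row_i (i \in S)%:R.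

Lemma adjmx_sym : (adjmx R e)^T = adjmx R e.
Proof. by case: e_simple => _ e_sym; apply/matrixP => i j; rewrite !mxE e_sym. Qed.

Lemma bform_adjmx_indicator S :
  bform (adjmx R e) (indicator_row S) (indicator_row S) = (edge_count e S S)%:R.
Proof.
rewrite bformE /edge_count natr_sum [RHS]big_mkcond; apply: eq_bigr => v _.
rewrite [indicator_row S 0 v]mxE; case: (v \in S); last first.
  by rewrite big1 // => u _; rewrite mulr0.
rewrite card_nbhd natr_sum [RHS]big_mkcond; apply: eq_bigr => u _.
by rewrite /adjmx !mxE mulr1; case: (u \in S); rewrite ?mul1r ?mul0r.
Qed.

Lemma sqnorm_indicator S : sqnorm (indicator_row S) = #|S|%:R.
Proof.
rewrite sqnormE -sum1_card natr_sum [RHS]big_mkcond; apply: eq_bigr => i _.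
by rewrite mxE; case: (i \in S); rewrite ?expr1n ?expr0n.
Qed.

Lemma edge_count_le_spectral_radius S : (edge_count e S S)%:R <= lam * #|S|%:R.
Proof.
rewrite -bform_adjmx_indicator -sqnorm_indicator.
exact: bform_le_max_eigenvalue adjmx_sym lam_ub.
Qed.

Lemma spectral_radius_ge0 : 0 <= lam.
Proof.
have := edge_count_le_spectral_radius [set: 'I_n]; rewrite cardsT card_ord.
have : 0 < n%:R :> R by rewrite ltr0n.
have : 0 <= (edge_count e [set: 'I_n] [set: 'I_n])%:R :> R by [].
nra.
Qed.

Lemma global_dual_alliance_card_ge S : global_dual_alliance e S ->
  (2 * gsize e + n)%:R / (4 * (lam + 1)) <= #|S|%:R.
Proof.
have [e_irr e_sym] := e_simple.
move/(global_dual_alliance_edge_bound e_irr e_sym).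
rewrite -(ler_nat R) !(natrM, natrD) => le_edge.
have := edge_count_le_spectral_radius S; have := spectral_radius_ge0 => lam_ge0 le_lam.
rewrite ler_pdivrMr; lra.
Qed.

Lemma global_strong_dual_alliance_card_ge S : global_strong_dual_alliance e S ->
  (gsize e + n)%:R / (2 * lam + 1) <= #|S|%:R.
Proof.
have [e_irr e_sym] := e_simple.
move/(global_strong_dual_alliance_edge_bound e_irr e_sym).
rewrite -(ler_nat R) !(natrM, natrD) => le_edge.
have := edge_count_le_spectral_radius S; have := spectral_radius_ge0 => lam_ge0 le_lam.
rewrite ler_pdivrMr; lra.
Qed.

End SpectralBound.

Lemma ceil_le_bigmin_card (R : realType) n (P : pred {set 'I_n}) (x : R) :
  P [set: 'I_n] -> (forall S, P S -> x <= #|S|%:R) ->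
  Num.ceil x <= (\big[minn/n]_(S | P S) #|S|)%:Z.
Proof.
move=> PT le_card; rewrite ceil_le_int.
apply: (big_ind (fun k : nat => x <= k%:R)) => //.
- by have := le_card _ PT; rewrite cardsT card_ord.
- by move=> i j x_le_i x_le_j; rewrite /minn; case: ifP.
Qed.

Theorem theorem8 (R : realType) (n : nat) (e : rel 'I_n) (lam : R) :
  (0 < n)%N -> simple_graph e -> spectral_radius e lam ->
  Num.ceil (((2 * gsize e + n)%:R) / (4 * (lam + 1))) <= (gamma_ad e)%:Z /\
  Num.ceil (((gsize e + n)%:R) / (2 * lam + 1)) <= (gamma_sad e)%:Z.
Proof.
move=> n_gt0 e_simple [_ lam_ub]; split; apply: ceil_le_bigmin_card.
- exact: global_dual_alliance_setT.
- exact: global_dual_alliance_card_ge.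
- exact: global_strong_dual_alliance_setT.
- exact: global_strong_dual_alliance_card_ge.
Qed.
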